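(* The full subcategory $\mathsf{PreComp}\subseteq\mathsf{sSet}^+$ of pre-complicial sets is closed under the Gray tensor product: if $X$ and $Y$ are pre-complicial, then so is $X\otimes Y$.
   Context: A marked simplicial set is a simplicial set $X$ with a set of marked simplices of positive dimension containing all degenerate simplices; maps preserve marked simplices; category $\mathsf{sSet}^+$. Simplicial operators act on the right; $\delta_k$ denotes the $k$-th face operator. For $n\ge1$ and $0\le k\le n$, $\Delta^n_k$ is $\Delta^n$ in which a non-degenerate simplex is marked iff it contains all vertices in $\{k-1,k,k+1\}\cap[n]$. For $n\ge2$, $(\Delta^n_k)''$ is $\Delta^n_k$ with additionally all $(n-1)$-simplices marked, and $(\Delta^n_k)'$ is $\Delta^n_k$ with additionally all $(n-1)$-faces other than $\delta_k$ marked. A pre-complicial set is a marked simplicial set with the right lifting property with respect to all inclusions $(\Delta^n_k)'\to(\Delta^n_k)''$; $\mathsf{PreComp}$ is the full subcategory of these. For $0\le p\le n$ with $p+q=n$, let $\lfloor p\rfloor\colon[p]\to[n]$ be $i\mapsto i$ and $\lceil q\rceil\colon[q]\to[n]$ be $i\mapsto p+i$. For $X,Y\in\mathsf{sSet}^+$ and $(x,y)\in X_n\times Y_n$, $(x,y)$ is $i$-cloven ($0\le i\le n$) if $x\lfloor i\rfloor$ is marked in $X$ or $y\lceil n-i\rceil$ is marked in $Y$ (note $0$-simplices are never marked). The Gray tensor product $X\otimes Y$ has underlying simplicial set $X\times Y$, with $(x,y)$ marked iff it is $i$-cloven for every $0\le i\le n$. *)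

From mathcomp Require Import all_boot.
Set Implicit Arguments. Unset Strict Implicit. Unset Printing Implicit Defensive.

Definition mono m n (f : {ffun 'I_m.+1 -> 'I_n.+1}) : bool :=
  [forall i : 'I_m.+1, forall j : 'I_m.+1, (i <= j) ==> (f i <= f j)].

Definition op m n := {f : {ffun 'I_m.+1 -> 'I_n.+1} | mono f}.

Definition opf m n (f : op m n) : 'I_m.+1 -> 'I_n.+1 := fun i => val f i.

Lemma mono_id n : mono [ffun i : 'I_n.+1 => i].
Proof. by apply/forallP=> i; apply/forallP=> j; rewrite !ffunE; apply/implyP. Qed.

Definition idop n : op n n := exist (fun f => mono f) _ (mono_id n).

Lemma mono_comp l m n (g : op m n) (f : op l m) :
  mono [ffun i : 'I_l.+1 => val g (val f i)].
Proof.
apply/forallP=> i; apply/forallP=> j; rewrite !ffunE; apply/implyP=> hij.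
have hf := (implyP (forallP (forallP (svalP f) i) j) hij).
exact: (implyP (forallP (forallP (svalP g) _) _) hf).
Qed.

(* comp g f = g o f  (first f : [l] -> [m], then g : [m] -> [n]) *)
Definition comp l m n (g : op m n) (f : op l m) : op l n :=
  exist (fun h => mono h) _ (mono_comp g f).

Record sSet := SSet {
  sob :> nat -> Type;
  sact : forall m n, op m n -> sob n -> sob m;
  sact_id : forall n (x : sob n), sact (idop n) x = x;
  sact_comp : forall l m n (f : op l m) (g : op m n) (x : sob n),
      sact f (sact g x) = sact (comp g f) x
}.
Arguments sact {s m n}.

Definition degenerate (X : sSet) n (x : X n) : Prop :=
  exists m (s : op n m), m < n /\
    (forall j : 'I_m.+1, exists i : 'I_n.+1, val s i = j) /\
    exists y : X m, x = sact s y.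

Record msSet := MSSet { msU :> sSet; marked : forall n, msU n -> Prop }.
Arguments marked {m n}.

Definition is_msSet (X : msSet) : Prop :=
  (forall x : X 0, ~ marked x) /\
  (forall n (x : X n), degenerate x -> marked x).

Record msMap (X Y : msSet) := MSMap {
  mfun :> forall n, X n -> Y n;
  mfun_nat : forall m n (f : op m n) (x : X n), mfun (sact f x) = sact f (mfun x);
  mfun_mark : forall n (x : X n), marked x -> marked (mfun x)
}.

Lemma comp_id_r m n (x : op m n) : comp x (idop m) = x.
Proof. by apply: val_inj; apply/ffunP=> i; rewrite /= !ffunE. Qed.

Lemma comp_assoc l m p n (x : op p n) (g : op m p) (f : op l m) :
  comp (comp x g) f = comp x (comp g f).
Proof. by apply: val_inj; apply/ffunP=> i; rewrite /= !ffunE. Qed.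

Definition Delta (n : nat) : sSet :=
  @SSet (fun m => op m n) (fun l m f x => comp x f)
        (fun m x => comp_id_r x)
        (fun l m p f g x => comp_assoc x g f).

Definition contains_S (n k m : nat) (x : op m n) : bool :=
  [forall v : 'I_n.+1, ((k <= v.+1) && (v <= k.+1)) ==>
                       [exists i : 'I_m.+1, val x i == v]].

Definition Dk_mark (n k m : nat) (x : Delta n m) : Prop :=
  degenerate x \/ (~ degenerate x /\ contains_S k x).

Definition is_face_k (n k m : nat) (x : op m n) : bool :=
  (m.+1 == n) && [forall i : 'I_m.+1, val (val x i) == bump k i].

Definition Delta_k (n k : nat) : msSet :=
  @MSSet (Delta n) (fun m x => Dk_mark k x).

Definition Delta_k'' (n k : nat) : msSet :=
  @MSSet (Delta n) (fun m x => Dk_mark k x \/ m.+1 = n).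

Definition Delta_k' (n k : nat) : msSet :=
  @MSSet (Delta n) (fun m x => Dk_mark k x \/ (m.+1 = n /\ ~~ is_face_k k x)).

(* RLP w.r.t. the inclusions (Delta^n_k)' -> (Delta^n_k)'' (identity on
   underlying simplicial sets), for n >= 2 and 0 <= k <= n. *)
Definition pre_complicial (X : msSet) : Prop :=
  forall n k : nat, 2 <= n -> k <= n ->
  forall f : msMap (Delta_k' n k) X,
  exists g : msMap (Delta_k'' n k) X,
    forall m (x : Delta n m), g m x = f m x.

Definition prod_sSet (X Y : sSet) : sSet.
Proof.
refine (@SSet (fun n => (X n * Y n)%type)
              (fun m n f p => (sact f p.1, sact f p.2)) _ _).
- by move=> n [x y] /=; rewrite !sact_id.
- by move=> l m n f g [x y] /=; rewrite !sact_comp.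
Defined.

Lemma mono_floor n (i : 'I_n.+1) :
  mono [ffun j : 'I_i.+1 => widen_ord (ltn_ord i) j].
Proof. by apply/forallP=> a; apply/forallP=> b; rewrite !ffunE; apply/implyP. Qed.

Definition floor_op n (i : 'I_n.+1) : op i n := exist (fun h => mono h) _ (mono_floor i).

Lemma mono_ceil n (i : 'I_n.+1) :
  mono [ffun j : 'I_(n - i).+1 => (inord (i + j) : 'I_n.+1)].
Proof.
have bd (j : 'I_(n - i).+1) : i + j <= n.
  have hj := ltn_ord j; have hi := ltn_ord i; rewrite ltnS in hi; rewrite ltnS in hj.
  by rewrite -(leq_add2l i) (subnKC hi) in hj.
apply/forallP=> a; apply/forallP=> b; rewrite !ffunE; apply/implyP=> hab.
by rewrite !inordK ?ltnS ?bd // leq_add2l.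
Qed.

Definition ceil_op n (i : 'I_n.+1) : op (n - i) n := exist (fun h => mono h) _ (mono_ceil i).

Definition cloven (X Y : msSet) n (x : X n) (y : Y n) (i : 'I_n.+1) : Prop :=
  marked (sact (floor_op i) x) \/ marked (sact (ceil_op i) y).

Definition gray (X Y : msSet) : msSet :=
  @MSSet (prod_sSet X Y)
         (fun n p => forall i : 'I_n.+1, cloven p.1 p.2 i).

(* Simplicial operators [m] -> [n] are handled through their underlying
   monotone functions on nat, so that all the combinatorics is arithmetic;
   [face_marked c m g] says that the face of the simplex c along the
   monotone map g : [m] -> [n] is marked.

   In X (x) Y, a face (a.g, b.g) of a simplex (a, b) is marked iff at every
   cleaving index i, a.g|[0,i] or b.g|[i,m] is marked ([gray_face_marked]).
   Given a map (Delta^n_k)' -> X (x) Y with top simplex (a, b), we show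
   that its face d_k is marked ([face_k_marked]), by cases on the cleaving
   index s: either the relevant half of d_k is marked outright, or the
   lifting property of Y (for s < k) or of X (for k <= s) is applied to a
   simplex of b (resp. a); its hypotheses are checked by cleaving "joins"
   of front faces of a with back faces of b ([back_marked],
   [front_marked]). *)
From Pilot Require Import Defs.
From mathcomp Require Import all_boot zify.
From Stdlib Require Import Classical.
(* composition of simplicial operators, shadowing ssrfun's [comp] *)
Import Pilot.Defs.
Set Implicit Arguments. Unset Strict Implicit. Unset Printing Implicit Defensive.

Definition monotone_upto (m : nat) (g : nat -> nat) : Prop :=
  forall i j, i <= j <= m -> g i <= g j.

Definition bounded_upto (m n : nat) (g : nat -> nat) : Prop :=
  forall i, i <= m -> g i <= n.

Definition oprep m n (x : op m n) (g : nat -> nat) : Prop :=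
  forall i : 'I_m.+1, nat_of_ord (val x i) = g i.

Lemma op_ext m n (x y : op m n) :
  (forall i : 'I_m.+1, nat_of_ord (val x i) = nat_of_ord (val y i)) -> x = y.
Proof. by move=> H; apply: val_inj; apply/ffunP=> i; apply: val_inj; exact: H. Qed.

Lemma oprep_uniq m n (x y : op m n) g : oprep x g -> oprep y g -> x = y.
Proof. by move=> Hx Hy; apply: op_ext=> i; rewrite Hx Hy. Qed.

Definition opfun m n (x : op m n) : nat -> nat := fun i => val x (inord i).

Lemma oprep_opfun m n (x : op m n) : oprep x (opfun x).
Proof. by move=> i; rewrite /opfun inord_val. Qed.

Lemma oprep_mono m n (x : op m n) g : oprep x g -> monotone_upto m g.
Proof.
move=> Hx i j /andP[hij hjm].
have him : i < m.+1 by lia.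
have hjm' : j < m.+1 by lia.
rewrite -(Hx (Ordinal him)) -(Hx (Ordinal hjm')).
exact: (implyP (forallP (forallP (svalP x) (Ordinal him)) (Ordinal hjm')) hij).
Qed.

Lemma oprep_bound m n (x : op m n) g : oprep x g -> bounded_upto m n g.
Proof.
move=> Hx i him; have h : i < m.+1 by lia.
by rewrite -(Hx (Ordinal h)) -ltnS ltn_ord.
Qed.

Lemma ex_op m n (g : nat -> nat) :
  monotone_upto m g -> bounded_upto m n g -> exists x : op m n, oprep x g.
Proof.
move=> Hm Hb.
have hb (i : 'I_m.+1) : g i < n.+1 by rewrite ltnS; apply: Hb; rewrite -ltnS.
pose F := [ffun i : 'I_m.+1 => (Ordinal (hb i) : 'I_n.+1)].
have mF : mono F.
  apply/forallP=> i; apply/forallP=> j; apply/implyP=> hij; rewrite !ffunE /=.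
  by apply: Hm; rewrite hij /= -ltnS ltn_ord.
by exists (exist (fun f => mono f) F mF) => i /=; rewrite ffunE.
Qed.

Lemma oprep_comp l m n (x : op m n) (y : op l m) g h :
  oprep x g -> oprep y h -> oprep (comp x y) (g \o h).
Proof. by move=> Hx Hy i; rewrite /comp /= ffunE Hx /= Hy. Qed.

Lemma oprep_floor n (i : 'I_n.+1) : oprep (floor_op i) id.
Proof. by move=> j; rewrite /floor_op /= ffunE. Qed.

Lemma oprep_ceil n (i : 'I_n.+1) : oprep (ceil_op i) (fun j => i + j).
Proof.
move=> j; rewrite /ceil_op /= ffunE inordK //.
by have := ltn_ord j; have := ltn_ord i; lia.
Qed.

Lemma comp_id_l m n (x : op m n) : comp (idop n) x = x.
Proof. by apply: op_ext=> i; rewrite /= !ffunE. Qed.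

Lemma bumpE j i : bump j i = if j <= i then i.+1 else i.
Proof. by rewrite /bump; case: leqP. Qed.

Lemma ex_face M j : j <= M.+1 -> exists x : op M M.+1, oprep x (bump j).
Proof.
move=> hj; apply: ex_op => [i i' /andP[h _]|i hi]; first by rewrite leq_bump2.
by rewrite bumpE; case: (leqP j i); lia.
Qed.

Definition face_marked (Z : msSet) n (c : Z n) m (g : nat -> nat) : Prop :=
  exists x : op m n, oprep x g /\ marked (sact x c).

Lemma face_marked_ext (Z : msSet) n (c : Z n) m g h :
  face_marked c m g -> (forall i, i <= m -> g i = h i) -> face_marked c m h.
Proof.
case=> x [Hx Hm] E; exists x; split=> // i.
by rewrite Hx E // -ltnS ltn_ord.
Qed.

Lemma face_marked_op (Z : msSet) n (c : Z n) m g (x : op m n) :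
  face_marked c m g -> oprep x g -> marked (sact x c).
Proof. by case=> y [Hy Hm] Hx; rewrite (oprep_uniq Hx Hy). Qed.

Lemma face_marked_dim0 (Z : msSet) n (c : Z n) g : is_msSet Z -> ~ face_marked c 0 g.
Proof. by move=> [H0 _] [x [_ Hm]]; apply: (H0 _ Hm). Qed.

(* an operator whose function repeats a value yields degenerate simplices:
   it factors through the codegeneracy [m] -> [m-1] identifying i, i+1 *)
Lemma degenerate_of_repeat (Z : sSet) m n (x : op m n) g (c : Z n) :
  oprep x g -> (exists2 i, i < m & g i = g i.+1) -> degenerate (sact x c).
Proof.
move=> Hx [i hi E]; case: m x Hx hi => [//|m] x Hx hi.
have Hm := oprep_mono Hx; have Hb := oprep_bound Hx.
have [s Hs] : exists s : op m.+1 m, oprep s (fun j => if j <= i then j else j.-1).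
  by apply: ex_op => [p q /andP[hpq hq]|p hp];
    case: (leqP p i) => ?; try case: (leqP q i) => ?; lia.
have [y Hy] : exists y : op m n, oprep y (fun l => if l <= i then g l else g l.+1).
  by apply: ex_op => [p q /andP[hpq hq]|p hp];
    case: (leqP p i) => ?; try case: (leqP q i) => ?; (apply: Hm || apply: Hb); lia.
exists m, s; split=> //; split.
  move=> j; have hj : (if j <= i then nat_of_ord j else j.+1) < m.+2.
    by have := ltn_ord j; case: (leqP j i); lia.
  exists (Ordinal hj); apply: val_inj; rewrite /= Hs /=.
  case: (leqP j i) => hji; first by rewrite hji.
  by rewrite leqNgt ltnS (ltnW hji).
exists (sact y c); rewrite sact_comp; congr sact; apply: op_ext => j.
rewrite (oprep_comp Hy Hs j) Hx /=.
have := ltn_ord j; case: (leqP j i) => h1 h2; first by rewrite h1.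
case: (leqP j.-1 i) => h3; last by rewrite prednK //; lia.
by have -> : nat_of_ord j = i.+1 by lia.
Qed.

Lemma degenerate_transfer (Z : sSet) N (c : Z N) m (x : op m N) :
  @degenerate (Delta N) m x -> degenerate (sact x c).
Proof.
case=> m0 [s [hm [hs [y E]]]]; exists m0, s; do 2!split=> //.
by exists (sact y c); rewrite sact_comp E.
Qed.

Lemma strict_or_repeat m (g : nat -> nat) : monotone_upto m g ->
  (forall i, i < m -> g i < g i.+1) \/ (exists2 i, i < m & g i = g i.+1).
Proof.
move=> Hm; case: (classic (exists2 i, i < m & g i = g i.+1)) => [h|h]; [by right|left].
move=> i him; have h1 : g i <= g i.+1 by apply: Hm; lia.
suff : g i <> g i.+1 by lia.
by move=> E; apply: h; exists i.
Qed.

Lemma strict_ge m (g : nat -> nat) :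
  (forall i, i < m -> g i < g i.+1) -> forall i, i <= m -> i <= g i.
Proof.
move=> Hs; elim=> [//|i IH] hi.
by have := Hs i hi; have := IH (ltnW hi); lia.
Qed.

Lemma strict_face_is_bump M (g : nat -> nat) :
  (forall i, i < M -> g i < g i.+1) -> g M <= M.+1 ->
  exists2 j, j <= M.+1 & forall i, i <= M -> g i = bump j i.
Proof.
move=> Hs HM.
have lo := strict_ge Hs.
have hi : forall d, d <= M -> g (M - d) + d <= M.+1.
  elim=> [|d IH] hd; first by rewrite subn0 addn0.
  have h1 := IH (ltnW hd); have h2 := Hs (M - d.+1) ltac:(lia).
  have e : (M - d.+1).+1 = M - d by lia.
  by rewrite e in h2; lia.
have up : forall i, i <= M -> g i <= i.+1.
  by move=> i him; have := hi (M - i) (leq_subr _ _); rewrite subKn //; lia.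
case: (classic (exists i, (i <= M) && (g i == i.+1))) => [ex|nex].
- (* j is the first index where g jumps *)
  case: (ex_minnP ex) => j /andP[hjM /eqP hj] hmin.
  exists j; first lia.
  have aft : forall d, j + d <= M -> g (j + d) = (j + d).+1.
    elim=> [|d IH] hd; first by rewrite addn0.
    have h1 := IH ltac:(lia); have h2 := Hs (j + d) ltac:(lia).
    by have h3 := up (j + d).+1 ltac:(lia); rewrite addnS; lia.
  move=> i him; rewrite bumpE; case: (leqP j i) => hji.
  + by have := aft (i - j) ltac:(lia); rewrite subnKC.
  + have h1 := lo i him; have h2 := up i him.
    case: (eqVneq (g i) i.+1) => [E|E]; last lia.
    by have := hmin i; rewrite him E eqxx /= => /(_ isT); lia.
- exists M.+1 => // i him; rewrite bumpE ltnNge him /=.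
  have h1 := lo i him; have h2 := up i him.
  case: (eqVneq (g i) i.+1) => [E|E]; last lia.
  by exfalso; apply: nex; exists i; rewrite him E eqxx.
Qed.

Definition covers (N k m : nat) (g : nat -> nat) : Prop :=
  forall v, v <= N -> k <= v.+1 -> v <= k.+1 -> exists2 i, i <= m & g i = v.

Section PreComplicialFace.
(* A simplex a : X n, precomposed with h : [M+1] -> [n], seen as a map
   Delta^{M+1} -> X.  The hypotheses say that it sends the simplices marked
   in (Delta^{M+1}_K)' to marked simplices. *)
Variables (X : msSet) (HX : is_msSet X) (n : nat) (a : X n) (M K : nat) (h : nat -> nat).
Hypothesis hK : K <= M.+1.
Hypothesis h_mono : monotone_upto M.+1 h.
Hypothesis h_bound : bounded_upto M.+1 n h.
Hypothesis marked_covering : forall m g, monotone_upto m g -> bounded_upto m M.+1 g ->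
  covers M.+1 K m g -> face_marked a m (h \o g).
Hypothesis marked_faces : forall j, j <= M.+1 -> j != K -> face_marked a M (h \o bump j).

Lemma marked_horn_image (y : op M.+1 n) m (x : op m M.+1) :
  oprep y h -> @marked (Delta_k' M.+1 K) m x -> marked (sact x (sact y a)).
Proof.
move=> Hy Hmx; have Hx := oprep_opfun x.
case: (strict_or_repeat (oprep_mono Hx)) => [Hst|Hrep]; last first.
  by apply: HX.2; exact: degenerate_of_repeat (sact y a) Hx Hrep.
case: Hmx => [[Hd|[_ Hc]]|[Hm Hf]].
- by apply: HX.2; exact: degenerate_transfer.
all: rewrite sact_comp.
-
  apply: (face_marked_op _ (oprep_comp Hy Hx)).
  apply: marked_covering; [exact: oprep_mono Hx | exact: oprep_bound Hx|].
  move=> v hv h1 h2; have hv' : v < M.+2 by lia.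
  have /implyP := forallP Hc (Ordinal hv').
  rewrite /= h1 h2 => /(_ isT)/existsP[i /eqP Ei].
  by exists (nat_of_ord i); [rewrite -ltnS ltn_ord | rewrite -(Hx i) Ei].
-
  case: Hm x Hx Hst Hf => -> x Hx Hst Hf.
  have [j hj Ej] := strict_face_is_bump Hst (oprep_bound Hx (leqnn M)).
  have Hxj : oprep x (bump j) by move=> i; rewrite Hx Ej // -ltnS ltn_ord.
  apply: (face_marked_op (marked_faces hj _) (oprep_comp Hy Hxj)).
  apply/eqP=> EjK; subst j; move: Hf; rewrite /is_face_k eqxx /=.
  by move/negP; apply; apply/forallP=> i; apply/eqP; exact: Hxj.
Qed.

Lemma pre_complicial_face : pre_complicial X -> 1 <= M ->
  face_marked a M (h \o bump K).
Proof.
move=> PX hM.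
have [y Hy] := ex_op h_mono h_bound.
set c := sact y a.
have fnat : forall m p (f' : op m p) (x : Delta_k' M.+1 K p),
    sact (sact f' x) c = sact f' (sact x c) by move=> *; rewrite sact_comp.
pose f : msMap (Delta_k' M.+1 K) X :=
  @MSMap _ _ (fun m (x : Delta_k' M.+1 K m) => sact (x : op m M.+1) c) fnat
    (fun m x => @marked_horn_image y m x Hy).
have [g Hg] := PX M.+1 K ltac:(lia) hK f.
have [d Hd] := ex_face hK.
have := @mfun_mark _ _ g M d (or_intror erefl).
rewrite Hg /= /c sact_comp => Hmk.
by exists (comp y d); split=> //; exact: oprep_comp.
Qed.

End PreComplicialFace.

(* case analysis on every innermost if-then-else of the goal *)
Ltac case_ifs := repeat match goal with |- context [if ?b then _ else _] =>
  lazymatch b with context [if _ then _ else _] => fail | _ => case: (boolP b) => ? /= end end.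

(* the concatenation of w : [0,l] -> [n] and V : [0,m] -> [n] along w l = V 0,
   as a map [0, l+m] -> [n] *)
Definition join (l : nat) (w V : nat -> nat) (j : nat) : nat :=
  if j <= l then w j else V (j - l).

Section Gray.
Variables (X Y : msSet) (HX : is_msSet X) (HY : is_msSet Y)
  (PX : pre_complicial X) (PY : pre_complicial Y) (n : nat) (a : X n) (b : Y n).

Definition gray_face_marked (m : nat) (g : nat -> nat) : Prop :=
  forall i, i <= m -> face_marked a i g \/ face_marked b (m - i) (fun j => g (i + j)).

Lemma gray_face_marked_ext m g h :
  gray_face_marked m g -> (forall i, i <= m -> g i = h i) -> gray_face_marked m h.
Proof.
move=> H E i hi; case: (H i hi) => Hm; [left|right];
  by apply: (face_marked_ext Hm) => j hj; apply: E; lia.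
Qed.

Lemma join_cleave l m w V : gray_face_marked (l + m) (join l w V) -> w l = V 0 ->
  face_marked a l w \/ face_marked b m V.
Proof.
move=> H E; case: (H l (leq_addr _ _)) => Hm; [left|right].
- by apply: (face_marked_ext Hm) => j hj; rewrite /join hj.
- rewrite addKn in Hm; apply: (face_marked_ext Hm) => j hj; rewrite /join.
  case: (boolP (l + j <= l)) => h1; last by rewrite addKn.
  have -> : j = 0 by lia.
  by rewrite addn0.
Qed.

(* If the front face a|[0,s] is unmarked, the face b.V (with V 0 > s > 0) is
   marked provided the joins of front faces of a through s with V are:
   otherwise the lifting property of X, applied to the simplex of a on the
   vertices 0, ..., s, V 0, would mark a|[0,s]. *)
Lemma back_marked_strict s m V : ~ face_marked a s id -> 0 < s -> s < V 0 -> V 0 <= n ->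
 (forall l w, monotone_upto l w -> w l = V 0 -> (exists2 i, i <= l & w i = s) ->
     gray_face_marked (l + m) (join l w V)) ->
 (forall t, t <= s ->
     gray_face_marked (s + m) (join s ((fun j => if j <= s then j else V 0) \o bump t) V)) ->
 face_marked b m V.
Proof.
move=> nA spos hlt hV Hjoin Hfaces.
apply: NNPP => nB; apply: nA.
set h := (fun j => if j <= s then j else V 0).
have h_mono : monotone_upto s.+1 h by move=> i j /andP[hij _]; rewrite /h; case_ifs; lia.
suff H : face_marked a s (h \o bump s.+1).
  apply: (face_marked_ext H) => i hi; rewrite /= bumpE /h.
  have -> : (s.+1 <= i) = false by apply/negbTE; lia.
  by rewrite hi.
apply: (pre_complicial_face HX _ h_mono _ _ _ PX spos) => //.
- by move=> i _; rewrite /h; case_ifs; lia.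
- move=> m' g gm gb gc.
  have [i1 hi1 E1] := gc s ltac:(lia) ltac:(lia) ltac:(lia).
  have [i2 hi2 E2] := gc s.+1 ltac:(lia) ltac:(lia) ltac:(lia).
  have gl : g m' = s.+1 by have := gm i2 m' ltac:(lia); have := gb m' (leqnn _); lia.
  have hw : monotone_upto m' (h \o g).
    by move=> i j hij; apply: h_mono; apply/andP; split; [exact: gm | apply: gb; lia].
  have hend : (h \o g) m' = V 0 by rewrite /= gl /h ltnn.
  case: (join_cleave (Hjoin m' (h \o g) hw hend _) hend) => //.
  by exists i1 => //; rewrite /= E1 /h leqnn.
- move=> j hj hjK.
  have hend : (h \o bump j) s = V 0.
    rewrite /= bumpE; have -> : (j <= s) = true by apply/idP; lia.
    by rewrite /h ltnn.
  by case: (join_cleave (Hfaces j ltac:(lia)) hend).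
Qed.

(* the same, allowing also V 0 = s (then a|[0,s] joined with V cleaves
   directly) and s = 0 (then a|[0,s] is a vertex) *)
Lemma back_marked s m V : ~ face_marked a s id -> s <= V 0 -> V 0 <= n ->
 (V 0 = s -> gray_face_marked (s + m) (join s id V)) ->
 (s = 0 -> 0 < V 0 -> gray_face_marked m V) ->
 (0 < s -> s < V 0 -> forall l w, monotone_upto l w -> w l = V 0 ->
     (exists2 i, i <= l & w i = s) -> gray_face_marked (l + m) (join l w V)) ->
 (0 < s -> s < V 0 -> forall t, t <= s ->
     gray_face_marked (s + m) (join s ((fun j => if j <= s then j else V 0) \o bump t) V)) ->
 face_marked b m V.
Proof.
move=> nA hs hV Hend Hs0 Hjoin Hfaces.
have [E|hlt] : V 0 = s \/ s < V 0 by lia.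
  by case: (join_cleave (Hend E) (esym E)).
have [s0|spos] : s = 0 \/ 0 < s by lia.
  case: (Hs0 s0 ltac:(lia) 0 (leq0n _)) => [/(face_marked_dim0 HX)//|Hm].
  by rewrite subn0 in Hm; apply: (face_marked_ext Hm) => j _; rewrite add0n.
exact: back_marked_strict nA spos hlt hV (Hjoin spos hlt) (Hfaces spos hlt).
Qed.

(* Dually, if the back face b|[s,n] is unmarked, the face a.U (with
   U m < s < n) is marked provided the joins of U with back faces of b
   through s are: otherwise the lifting property of Y, applied to the
   simplex of b on the vertices U m, s, ..., n, would mark b|[s,n]. *)
Lemma front_marked_strict s m U : ~ face_marked b (n - s) (fun j => s + j) ->
 s < n -> U m < s ->
 (forall l V, monotone_upto l V -> bounded_upto l n V -> V 0 = U m ->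
     (exists2 i, i <= l & V i = s) -> gray_face_marked (m + l) (join m U V)) ->
 (forall t, 1 <= t -> t <= (n - s).+1 ->
     gray_face_marked (m + (n - s))
       (join m U ((fun j => if j == 0 then U m else s + j.-1) \o bump t))) ->
 face_marked a m U.
Proof.
move=> nB slt hlt Hjoin Hfaces.
apply: NNPP => nA; apply: nB.
set h := (fun j => if j == 0 then U m else s + j.-1).
have h_mono : monotone_upto (n - s).+1 h.
  by move=> i j /andP[hij _]; rewrite /h; case_ifs; lia.
suff H : face_marked b (n - s) (h \o bump 0).
  by apply: (face_marked_ext H) => i hi; rewrite /= /h bumpE leq0n.
apply: (pre_complicial_face HY (leq0n _) h_mono _ _ _ PY ltac:(lia)).
- by move=> i hi; rewrite /h; case_ifs; lia.
- move=> m' g gm gb gc.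
  have [i0 hi0 E0] := gc 0 ltac:(lia) ltac:(lia) ltac:(lia).
  have [i1 hi1 E1] := gc 1 ltac:(lia) ltac:(lia) ltac:(lia).
  have g0 : g 0 = 0 by have := gm 0 i0 ltac:(lia); lia.
  have hw : monotone_upto m' (h \o g).
    by move=> i j hij; apply: h_mono; apply/andP; split; [exact: gm | apply: gb; lia].
  have hb : bounded_upto m' n (h \o g).
    by move=> i hi; have := gb i hi; rewrite /= /h; case_ifs; lia.
  have hstart : U m = (h \o g) 0 by rewrite /= g0 /h.
  case: (join_cleave (Hjoin m' (h \o g) hw hb (esym hstart) _) hstart) => //.
  by exists i1 => //; rewrite /= E1 /h /= addn0.
- move=> j hj hjK.
  have hstart : U m = (h \o bump j) 0.
    rewrite /= bumpE; have -> : (j <= 0) = false by apply/negbTE; lia.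
    by rewrite /h.
  by case: (join_cleave (Hfaces j ltac:(lia) hj) hstart).
Qed.

(* the same, allowing also U m = s (then U joined with b|[s,n] cleaves
   directly) and s = n (then b|[s,n] is a vertex) *)
Lemma front_marked s m U : ~ face_marked b (n - s) (fun j => s + j) -> s <= n -> U m <= s ->
 (U m = s -> gray_face_marked (m + (n - s)) (join m U (fun j => s + j))) ->
 (s = n -> U m < n -> gray_face_marked m U) ->
 (s < n -> U m < s -> forall l V, monotone_upto l V -> bounded_upto l n V -> V 0 = U m ->
     (exists2 i, i <= l & V i = s) -> gray_face_marked (m + l) (join m U V)) ->
 (s < n -> U m < s -> forall t, 1 <= t -> t <= (n - s).+1 ->
     gray_face_marked (m + (n - s))
       (join m U ((fun j => if j == 0 then U m else s + j.-1) \o bump t))) ->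
 face_marked a m U.
Proof.
move=> nB hs hU Hend Hsn Hjoin Hfaces.
have [E|hlt] : U m = s \/ U m < s by lia.
  by case: (join_cleave (Hend E) _) => //; rewrite addn0.
have [sn|slt] : s = n \/ s < n by lia.
  case: (Hsn sn ltac:(lia) m (leqnn _)) => // Hm.
  by rewrite subnn in Hm; case: (face_marked_dim0 HY Hm).
exact: front_marked_strict nB slt hlt (Hjoin slt hlt) (Hfaces slt hlt).
Qed.

Lemma monotone_id l : monotone_upto l id.
Proof. by move=> i j /andP[]. Qed.

Section FaceK.
(* the data of a map (Delta^n_k)' -> X (x) Y, in terms of its top simplex
   (a, b): all simplices covering {k-1, k, k+1} and all faces d_j, j <> k,
   are marked; we show that d_k is marked too *)
Variable k : nat.
Hypothesis hn : 2 <= n.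
Hypothesis hk : k <= n.
Hypothesis marked_covering : forall m g, monotone_upto m g -> bounded_upto m n g ->
  covers n k m g -> gray_face_marked m g.
Hypothesis marked_faces : forall j, j <= n -> j != k -> gray_face_marked n.-1 (bump j).

Lemma join_marked l m w V :
  monotone_upto l w -> w l = V 0 -> monotone_upto m V -> bounded_upto m n V ->
  (forall v, v <= n -> k <= v.+1 -> v <= k.+1 ->
    (exists2 i, i <= l & w i = v) \/ (exists2 i, i <= m & V i = v)) ->
  gray_face_marked (l + m) (join l w V).
Proof.
move=> wm wl Vm Vb Hc; apply: marked_covering.
- move=> i j /andP[hij hj]; rewrite /join.
  case: (leqP j l) => hjl.
    have -> : (i <= l) = true by apply/idP; lia.
    by apply: wm; lia.
  case: (leqP i l) => hil; last by apply: Vm; lia.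
  by apply: (leq_trans (wm i l ltac:(lia))); rewrite wl; apply: Vm; lia.
- move=> i hi; rewrite /join; case: (leqP i l) => hil; last by apply: Vb; lia.
  by apply: (leq_trans (wm i l ltac:(lia))); rewrite wl; apply: Vb; lia.
- move=> v hv h1 h2; case: (Hc v hv h1 h2) => [[i hi E]|[i hi E]].
    by exists i; [lia | rewrite /join hi].
  exists (l + i); first lia.
  rewrite /join; case: (leqP (l + i) l) => h; last by rewrite addKn.
  have e : i = 0 by lia.
  by subst i; rewrite addn0 wl.
Qed.

(* for k = n, d_n is marked at its last cleaving index n-1: its front half
   a.d_n is marked by the lifting property of X, since the back halves of
   the other faces and covering simplices are vertices *)
Lemma cleave_last : k = n -> face_marked a n.-1 (bump k).
Proof.
move=> ekn.
suff H : face_marked a n.-1 (id \o bump k) by [].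
apply: (pre_complicial_face HX _ (@monotone_id n.-1.+1) _ _ _ PX);
  [lia | by move=> i; lia | | | lia].
- move=> m' g gm gb gc.
  have H0 : gray_face_marked m' g.
    apply: marked_covering => //.
      by move=> i hi; have := gb i hi; lia.
    by move=> v hv h1 h2; apply: gc; lia.
  case: (H0 m' (leqnn _)) => [//|H].
  by rewrite subnn in H; case: (face_marked_dim0 HY H).
- move=> j hj hjK.
  case: (marked_faces (j := j) ltac:(lia) hjK (leqnn n.-1)) => // H.
  by rewrite subnn in H; case: (face_marked_dim0 HY H).
Qed.

(* dually, for k = 0, d_0 is marked at its first cleaving index 0 *)
Lemma cleave_first : k = 0 -> face_marked b n.-1 (bump k).
Proof.
move=> k0.
suff H : face_marked b n.-1 (id \o bump k) by [].
apply: (pre_complicial_face HY _ (@monotone_id n.-1.+1) _ _ _ PY);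
  [lia | by move=> i; lia | | | lia].
- move=> m' g gm gb gc.
  have H0 : gray_face_marked m' g.
    apply: marked_covering => //.
      by move=> i hi; have := gb i hi; lia.
    by move=> v hv h1 h2; apply: gc; lia.
  case: (H0 0 (leq0n _)) => [H|H]; first by case: (face_marked_dim0 HX H).
  by rewrite subn0 in H; apply: (face_marked_ext H) => i _; rewrite add0n.
- move=> j hj hjK.
  case: (marked_faces (j := j) ltac:(lia) hjK (leq0n n.-1)) => H.
    by case: (face_marked_dim0 HX H).
  by rewrite subn0 in H; apply: (face_marked_ext H) => i _; rewrite add0n.
Qed.

(* For s < k with s+1 < n and the front face a|[0,s] unmarked, the back half
   of d_k at s, b restricted to s, ..., k-1, k+1, ..., n, is marked: apply
   the lifting property of Y to b on the vertices s, ..., n, checking the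
   hypotheses with [back_marked]. *)
Section CleaveBefore.
Variable s : nat.
Hypothesis hsk : s < k.
Hypothesis hsn : s.+1 < n.
Hypothesis front_unmarked : ~ face_marked a s id.

Lemma cleave_before_covering m g : monotone_upto m g -> bounded_upto m (n - s.+1).+1 g ->
  covers (n - s.+1).+1 (k - s) m g -> face_marked b m ((fun j => s + j) \o g).
Proof.
move=> gm gb gc; set V := (fun j => s + j) \o g.
have Vc : covers n k m V.
  move=> v hv h1 h2; have [i hi E] := gc (v - s) ltac:(lia) ltac:(lia) ltac:(lia).
  by exists i => //; rewrite /V /= E; lia.
have Vm : monotone_upto m V by move=> i j hij; rewrite /V /=; have := gm i j hij; lia.
have Vb : bounded_upto m n V by move=> i hi; rewrite /V /=; have := gb i hi; lia.
have join_V l w : monotone_upto l w -> w l = V 0 -> gray_face_marked (l + m) (join l w V).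
  by move=> wm wl; apply: join_marked wm wl Vm Vb _ => v hv h1 h2; right; exact: Vc.
apply: (back_marked front_unmarked); [by rewrite /V /=; lia | exact: Vb | | | |].
- by move=> E; apply: join_V; [exact: monotone_id | rewrite E].
- by move=> _ _; exact: marked_covering Vm Vb Vc.
- by move=> _ _ l w wm wl _; exact: join_V.
- move=> _ hV0 t ht; apply: join_V.
  + move=> i j /andP[hij hj]; rewrite /= !bumpE.
    by case: (leqP t i); case: (leqP t j); case_ifs; lia.
  + rewrite /= bumpE; have -> : (t <= s) = true by apply/idP; lia.
    by rewrite ltnn.
Qed.

Lemma cleave_before_face0 : face_marked b (n - s.+1) ((fun j => s + j) \o bump 0).
Proof.
set V := (fun j => s + j) \o bump 0.
have Vj i : V i = s + i.+1 by rewrite /V /= bumpE leq0n.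
have Vm : monotone_upto (n - s.+1) V by move=> i j hij; rewrite !Vj; lia.
have Vb : bounded_upto (n - s.+1) n V by move=> i hi; rewrite Vj; lia.
apply: (back_marked front_unmarked); rewrite ?Vj; try lia.
- move=> s0 _; subst s; have -> : n - 1 = n.-1 by lia.
  apply: (gray_face_marked_ext (marked_faces (leq0n n) ltac:(lia))) => i hi.
  by rewrite Vj bumpE leq0n.
- move=> _ _ l w wm wl [i0 hi0 E0]; apply: join_marked wm wl Vm Vb _ => v hv h1 h2.
  have [vs|vs] : v = s \/ s < v by lia.
    by left; exists i0 => //; rewrite E0.
  by right; exists (v - s.+1); [lia | rewrite Vj; lia].
- move=> _ _ t ht; have -> : s + (n - s.+1) = n.-1 by lia.
  apply: (gray_face_marked_ext (marked_faces (j := t) ltac:(lia) ltac:(lia))) => i hi.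
  by rewrite /join; case: (leqP i s) => his; rewrite /= ?Vj !bumpE; case_ifs; lia.
Qed.

(* the faces d_j, 0 < j, of b on s, ..., n are faces of d_(s+j) *)
Lemma cleave_before_face_pos j : 0 < j -> j <= (n - s.+1).+1 -> j != k - s ->
  face_marked b (n - s.+1) ((fun i => s + i) \o bump j).
Proof.
move=> jpos hj hjK; set V := (fun i => s + i) \o bump j.
have V0 : V 0 = s.
  rewrite /V /= bumpE; have -> : (j <= 0) = false by apply/negbTE; lia.
  by rewrite addn0.
apply: (back_marked front_unmarked); try lia.
move=> _; have -> : s + (n - s.+1) = n.-1 by lia.
apply: (gray_face_marked_ext (marked_faces (j := s + j) ltac:(lia) ltac:(lia))) => i hi.
by rewrite /join /V; case: (leqP i s) => his; rewrite /= !bumpE; case_ifs; lia.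
Qed.

Lemma cleave_before : face_marked b (n.-1 - s) (fun j => bump k (s + j)).
Proof.
have -> : n.-1 - s = n - s.+1 by lia.
suff H : face_marked b (n - s.+1) ((fun j => s + j) \o bump (k - s)).
  apply: (face_marked_ext H) => i hi; rewrite /= !bumpE.
  by case: (leqP (k - s) i); case: (leqP k (s + i)); lia.
apply: (pre_complicial_face HY _ _ _ cleave_before_covering _ PY); try lia.
- by move=> i j /andP[hij _]; lia.
- by move=> i hi; lia.
- move=> j hj hjK; have [j0|jpos] : j = 0 \/ 0 < j by lia.
    by subst j; exact: cleave_before_face0.
  exact: cleave_before_face_pos.
Qed.

End CleaveBefore.

(* Dually, for k <= s with 0 < s and the back face b|[s+1,n] unmarked, the
   front half a|[0,s] of d_k is marked: apply the lifting property of X to a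
   on the vertices 0, ..., s+1, checking the hypotheses with
   [front_marked]. *)
Section CleaveAfter.
Variable s : nat.
Hypothesis hks : k <= s.
Hypothesis spos : 0 < s.
Hypothesis hsn : s < n.
Hypothesis back_unmarked : ~ face_marked b (n - s.+1) (fun j => s.+1 + j).

Lemma cleave_after_covering m g : monotone_upto m g -> bounded_upto m s.+1 g ->
  covers s.+1 k m g -> face_marked a m (id \o g).
Proof.
move=> gm gb gc; change (face_marked a m g).
have gc' : covers n k m g by move=> v hv h1 h2; apply: gc; lia.
have gb' : bounded_upto m n g by move=> i hi; have := gb i hi; lia.
have join_g l V : monotone_upto l V -> bounded_upto l n V -> g m = V 0 ->
    gray_face_marked (m + l) (join m g V).
  by move=> Vm Vb V0; apply: join_marked gm V0 Vm Vb _ => v hv h1 h2; left; exact: gc'.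
apply: (front_marked back_unmarked); [lia | exact: gb | | | |].
- by move=> E; apply: join_g => [i j hij|i hi|]; [lia | lia | rewrite E addn0].
- by move=> _ _; exact: marked_covering gm gb' gc'.
- by move=> _ _ l V Vm Vb V0 _; exact: join_g.
- move=> _ hlt t t1 t2; apply: join_g.
  + move=> i j /andP[hij hj]; rewrite /= !bumpE.
    by case: (leqP t i); case: (leqP t j); case_ifs; lia.
  + move=> i hi; rewrite /= !bumpE; have := gb m (leqnn _).
    by case: (leqP t i); case_ifs; lia.
  + rewrite /= bumpE; have -> : (t <= 0) = false by apply/negbTE; lia.
    by [].
Qed.

Lemma cleave_after_face j : j <= s.+1 -> j != k -> face_marked a s (id \o bump j).
Proof.
move=> hj hjK; change (face_marked a s (bump j)).
have bm l : monotone_upto l (bump j) by move=> i i' /andP[h _]; rewrite leq_bump2.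
apply: (front_marked back_unmarked); rewrite /=;
  [lia | by rewrite bumpE; case: (leqP j s); lia | | | |].
- move=> E; have -> : s + (n - s.+1) = n.-1 by lia.
  have hjs : j <= s by move: E; rewrite bumpE; case: (leqP j s); lia.
  apply: (gray_face_marked_ext (marked_faces (j := j) ltac:(lia) hjK)) => i hi.
  by rewrite /join; case: (leqP i s) => his; rewrite /= !bumpE; case_ifs; lia.
- move=> E hlt.
  have hjs : j = s.+1 by move: hlt; rewrite bumpE; case: (leqP j s); lia.
  by subst j; have := marked_faces (j := s.+1) ltac:(lia) hjK; rewrite -E.
- move=> _ hlt l V Vm Vb V0 [i1 hi1 E1].
  have hjs : j = s.+1 by move: hlt; rewrite bumpE; case: (leqP j s); lia.
  subst j; apply: join_marked (bm s) (esym V0) Vm Vb _ => v hv h1 h2.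
  have [vs|vs] : v <= s \/ v = s.+1 by lia.
    left; exists v => //; rewrite bumpE.
    by have -> : (s.+1 <= v) = false by apply/negbTE; lia.
  by right; exists i1 => //; rewrite E1.
- move=> _ hlt t t1 t2.
  have hjs : j = s.+1 by move: hlt; rewrite bumpE; case: (leqP j s); lia.
  subst j; have -> : s + (n - s.+1) = n.-1 by lia.
  apply: (gray_face_marked_ext (marked_faces (j := s + t) ltac:(lia) ltac:(lia))) => i hi.
  by rewrite /join; case: (leqP i s) => his; rewrite /= !bumpE; case_ifs; lia.
Qed.

Lemma cleave_after : face_marked a s (bump k).
Proof.
suff H : face_marked a s (id \o bump k) by [].
apply: (pre_complicial_face HX _ (@monotone_id s.+1) _ cleave_after_covering
          cleave_after_face PX spos); first lia.
by move=> i hi; lia.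
Qed.

End CleaveAfter.

Lemma face_k_marked : gray_face_marked n.-1 (bump k).
Proof.
move=> s hs; case: (ltnP s k) => hsk.
- have [hsn|hsn] : s.+1 < n \/ s.+1 = n by lia.
  + case: (classic (face_marked a s id)) => [HA|nA]; last by right; exact: cleave_before.
    left; apply: (face_marked_ext HA) => i hi; rewrite bumpE.
    by have -> : (k <= i) = false by apply/negbTE; lia.
  + have -> : s = n.-1 by lia.
    by left; apply: cleave_last; lia.
- have [s0|spos] : s = 0 \/ 0 < s by lia.
  + right; subst s; rewrite subn0.
    by apply: (face_marked_ext (cleave_first _)) => [|i _]; [lia | rewrite add0n].
  + case: (classic (face_marked b (n - s.+1) (fun j => s.+1 + j))) => [HB|nB].
      right; have -> : n.-1 - s = n - s.+1 by lia.
      apply: (face_marked_ext HB) => i hi; rewrite bumpE.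
      by have -> : (k <= s + i) = true by apply/idP; lia.
    by left; apply: (cleave_after hsk spos _ nB); lia.
Qed.

End FaceK.
End Gray.

(* the marking axioms of sSet^+ hold for X (x) Y: a degenerate simplex
   repeats a vertex i ~ i+1, and is then cloven at any index through a
   degenerate front or back half *)
Lemma gray_msSet (X Y : msSet) : is_msSet X -> is_msSet Y -> is_msSet (gray X Y).
Proof.
move=> HX HY; split.
  by move=> x /(_ ord0) [H|H]; [exact: HX.1 _ H | exact: HY.1 _ H].
move=> n' [x y] [m [s [hm [_ [[x' y'] [Ex Ey]]]]]] i.
rewrite /cloven /= Ex Ey !sact_comp.
have Hs := oprep_opfun s.
have [j hj Ej] : exists2 j, j < n' & opfun s j = opfun s j.+1.
  case: (strict_or_repeat (oprep_mono Hs)) => // Hst.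
  by have := strict_ge Hst (leqnn n'); have := oprep_bound Hs (leqnn n'); lia.
case: (ltnP j i) => hji.
- left; apply: HX.2; apply: (degenerate_of_repeat x' (oprep_comp Hs (@oprep_floor _ i))).
  by exists j.
- right; apply: HY.2; apply: (degenerate_of_repeat y' (oprep_comp Hs (@oprep_ceil _ i))).
  exists (j - i); first by have := ltn_ord i; lia.
  have e : i + (j - i).+1 = j.+1 by lia.
  by rewrite /= subnKC // e.
Qed.

Lemma gray_marked_iff (X Y : msSet) n (a : X n) (b : Y n) m (x : op m n) g :
  oprep x g -> (@marked (gray X Y) m (sact x a, sact x b) <-> gray_face_marked a b m g).
Proof.
move=> Hx; split.
- move=> H i hi; have hi' : i < m.+1 by lia.
  case: (H (Ordinal hi')) => Hm; [left|right]; rewrite sact_comp in Hm.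
  + exists (comp x (floor_op (Ordinal hi'))); split=> //.
    exact: oprep_comp Hx (@oprep_floor _ (Ordinal hi')).
  + exists (comp x (ceil_op (Ordinal hi'))); split=> //.
    exact: oprep_comp Hx (@oprep_ceil _ (Ordinal hi')).
- move=> H i; have hi : nat_of_ord i <= m by rewrite -ltnS ltn_ord.
  case: (H i hi) => Hm; [left|right]; rewrite sact_comp; apply: (face_marked_op Hm).
  + exact: oprep_comp Hx (@oprep_floor _ i).
  + exact: oprep_comp Hx (@oprep_ceil _ i).
Qed.

Section GrayLifting.
Variables (X Y : msSet) (n k : nat) (f : msMap (Delta_k' n k) (gray X Y)).
Hypothesis hn : 2 <= n.
Hypothesis hk : k <= n.

Let a : X n := (f n (idop n)).1.
Let b : Y n := (f n (idop n)).2.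

Lemma msMap_top m (x : op m n) : f m x = (sact x a, sact x b).
Proof.
have e : @sact (Delta_k' n k) m n x (idop n) = x := comp_id_l x.
by rewrite -{1}e (mfun_nat f x (idop n)).
Qed.

Lemma msMap_face_marked m (x : op m n) g :
  oprep x g -> @marked (Delta_k' n k) m x -> gray_face_marked a b m g.
Proof. by move=> Hx /(@mfun_mark _ _ f); rewrite msMap_top (gray_marked_iff _ _ Hx). Qed.

Lemma msMap_marked_covering m g : monotone_upto m g -> bounded_upto m n g ->
  covers n k m g -> gray_face_marked a b m g.
Proof.
move=> gm gb gc; have [x Hx] := ex_op gm gb.
apply: (msMap_face_marked Hx); left.
case: (classic (@degenerate (Delta n) m x)) => Hd; [by left | right; split=> //].
apply/forallP=> v; apply/implyP=> /andP[h1 h2].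
have [i hi E] := gc v ltac:(by rewrite -ltnS ltn_ord) h1 h2.
apply/existsP; exists (inord i); apply/eqP; apply: val_inj.
by rewrite /= Hx inordK // ltnS.
Qed.

Lemma msMap_marked_faces j : j <= n -> j != k -> gray_face_marked a b n.-1 (bump j).
Proof.
move=> hj hjk; have [x Hx] : exists x : op n.-1 n, oprep x (bump j).
  apply: ex_op => [i i' /andP[h _]|i hi]; first by rewrite leq_bump2.
  by rewrite bumpE; case: (leqP j i); lia.
apply: (msMap_face_marked Hx); right; split; first lia.
apply/negP=> /andP[_ /forallP H].
have hmn : minn j k < n.-1.+1 by lia.
move/eqP: (H (Ordinal hmn)) => E.
have : bump j (minn j k) = bump k (minn j k) by rewrite -(Hx (Ordinal hmn)); exact: E.
by rewrite !bumpE; case: (leqP j (minn j k)); case: (leqP k (minn j k)); lia.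
Qed.


Lemma msMap_marked'' (HX : is_msSet X) (HY : is_msSet Y)
    (PX : pre_complicial X) (PY : pre_complicial Y) m (x : op m n) :
  @marked (Delta_k'' n k) m x -> marked (f m x).
Proof.
case=> [Hd|Hm]; first exact: (@mfun_mark _ _ f m x (or_introl Hd)).
case: (boolP (is_face_k k x)) => Hf; last exact: (@mfun_mark _ _ f m x (or_intror (conj Hm Hf))).
have em : m = n.-1 by lia.
subst m; have Hx : oprep x (bump k) by move: Hf => /andP[_ /forallP H] i; move/eqP: (H i).
rewrite msMap_top; apply/(gray_marked_iff _ _ Hx).
apply: (face_k_marked HX HY PX PY hn hk msMap_marked_covering (@msMap_marked_faces)).
Qed.

End GrayLifting.

Lemma gray_pre_complicial (X Y : msSet) : is_msSet X -> is_msSet Y ->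
  pre_complicial X -> pre_complicial Y -> pre_complicial (gray X Y).
Proof.
move=> HX HY PX PY n k hn hk f.
by exists (@MSMap (Delta_k'' n k) (gray X Y) (fun m (x : op m n) => f m x)
  (@mfun_nat _ _ f) (msMap_marked'' f hn hk HX HY PX PY)).
Qed.

Theorem theorem1p24 (X Y : msSet) :
  is_msSet X -> is_msSet Y ->
  pre_complicial X -> pre_complicial Y ->
  is_msSet (gray X Y) /\ pre_complicial (gray X Y).
Proof.
move=> HX HY PX PY; split; [exact: gray_msSet | exact: gray_pre_complicial].
Qed.
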